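(* Let $N=(V,E)$ be a rooted DAG, let $E_T$ and $E_N$ be its sets of tree arcs and network arcs, respectively, and let $N^*=(V,E^* )$ be the directed graph with $E^*=E\cup E_N^{-1}$, where $E_N^{-1}=\{(v,u)\mid (u,v)\in E_N\}$. The following are equivalent: (i) $N$ is strongly time consistent; (ii) $N^*$ has no cycle containing some tree arc of $N$; (iii) $N$ admits a temporal representation.
   Context: In a DAG, a tree node is a node of in-degree at most 1 and a hybrid node one of in-degree greater than 1; the root is the (unique) node of in-degree 0. A tree arc is an arc whose head is a tree node; a network arc is an arc whose head is a hybrid node. A path in a directed graph is a sequence of nodes $(v_0,\dots,v_k)$ with each $(v_{i-1},v_i)$ an arc; it is a cycle if $v_k=v_0$ (and $k\ge1$). $N$ is strongly time consistent if for any two nodes $x,y$ for which there exists a sequence of nodes $(v_0,\dots,v_k)$ with $v_0=x$, $v_k=y$, such that for every $i=0,\dots,k-1$ either $(v_i,v_{i+1})\in E$ or $(v_{i+1},v_i)$ is a network arc of $N$, and at least one pair $(v_i,v_{i+1})$ is a tree arc of $N$, the nodes $x$ and $y$ do not have a hybrid child in common. A temporal representation of $N$ is a map $\tau:V\to\mathbb{N}$ such that $\tau(r)=0$ for the root $r$, $\tau(u)<\tau(v)$ for every $(u,v)\in E_T$, and $\tau(u)=\tau(v)$ for every $(u,v)\in E_N$. *)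

(* A directed graph N = (V,E) is a finite type V with an
   arc relation E : rel V (no multi-arcs). *)
From mathcomp Require Import all_boot.
Set Implicit Arguments. Unset Strict Implicit. Unset Printing Implicit Defensive.

Section Net.
Variables (V : finType) (E : rel V).

Definition indeg (v : V) : nat := #|[pred u | E u v]|.

Definition tree_node (v : V) : bool := indeg v <= 1.
Definition hybrid_node (v : V) : bool := 1 < indeg v.

Definition is_root (r : V) : bool := indeg r == 0.

Definition tree_arc (u v : V) : bool := E u v && tree_node v.
Definition network_arc (u v : V) : bool := E u v && hybrid_node v.

Definition has_cycle (e : rel V) : Prop :=
  exists (x : V) (p : seq V), p != [::] /\ path e x p /\ last x p = x.

Definition rooted_DAG : Prop :=
  ~ has_cycle E /\ exists r : V, is_root r /\ forall v, is_root v -> v = r.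

Definition Estar (u v : V) : bool := E u v || network_arc v u.

Definition has_tree_step (x : V) (p : seq V) : bool :=
  has (fun uv : V * V => tree_arc uv.1 uv.2) (zip (x :: p) p).

Definition strongly_time_consistent : Prop :=
  forall (x y : V) (p : seq V),
    path Estar x p -> last x p = y -> has_tree_step x p ->
    ~ (exists h : V, [&& hybrid_node h, E x h & E y h]).

Definition no_tree_cycle_in_Nstar : Prop :=
  ~ (exists (x : V) (p : seq V),
       [/\ p != [::], path Estar x p, last x p = x & has_tree_step x p]).

Definition temporal_representation (tau : V -> nat) : Prop :=
  [/\ forall r, is_root r -> tau r = 0,
      forall u v, tree_arc u v -> tau u < tau v
    & forall u v, network_arc u v -> tau u = tau v].

End Net.

(* Write x ~> y when N* has a path from x to y using some tree arc of N, so
   that (ii) says that ~> is irreflexive.  If x ~> y and h is a common hybrid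
   child of x and y, then x ~> y -> h -> x is a cycle, whence (ii) -> (i).
   Conversely a cycle of N* through a tree arc cannot stay inside the DAG N;
   at its first reversed network arc w -> h <- y the rest of the cycle is a
   path y ~> w, and h is a common hybrid child of y and w, whence (i) -> (ii).
   A temporal representation increases weakly along the arcs of N* and
   strictly along tree arcs, so it increases strictly along ~>, which gives
   (iii) -> (ii).  Under (ii), mapping v to the number of x with x ~> v is a
   temporal representation; the root gets 0 because it reaches every node. *)

From mathcomp Require Import all_boot.
Set Implicit Arguments. Unset Strict Implicit. Unset Printing Implicit Defensive.

Section TimeConsistency.
Variables (V : finType) (E : rel V).

Lemma hybrid_nodeN v : hybrid_node E v = ~~ tree_node E v.
Proof. by rewrite /hybrid_node /tree_node ltnNge. Qed.

Lemma sub_Estar : subrel E (Estar E).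
Proof. by move=> u v; rewrite /Estar => ->. Qed.

Lemma has_tree_step_cons x y p :
  has_tree_step E x (y :: p) = tree_arc E x y || has_tree_step E y p.
Proof. by []. Qed.

Lemma has_tree_step_cat x p q :
  has_tree_step E x (p ++ q) = has_tree_step E x p || has_tree_step E (last x p) q.
Proof.
by elim: p x => [|y p IH] x //; rewrite cat_cons !has_tree_step_cons IH orbA.
Qed.

Lemma has_tree_step_split x p : has_tree_step E x p ->
  exists p1 a p2, p = p1 ++ a :: p2 /\ tree_arc E (last x p1) a.
Proof.
elim: p x => [|y p IH] x //; rewrite has_tree_step_cons.
case/orP=> [xy | /IH [p1 [a [p2 [-> p1a]]]]].
- by exists [::], y, p.
- by exists (y :: p1), a, p2.
Qed.

Lemma has_cycle_connect x y : E x y -> connect E y x -> has_cycle E.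
Proof.
by move=> xy /connectP [p yp def_x]; exists x, (y :: p); rewrite /= xy yp -def_x.
Qed.

Definition tree_reach (x y : V) : bool :=
  [exists u, exists v,
     [&& connect (Estar E) x u, tree_arc E u v & connect (Estar E) v y]].

Lemma tree_reachP x y :
  reflect (exists p, [/\ path (Estar E) x p, last x p = y & has_tree_step E x p])
          (tree_reach x y).
Proof.
apply: (iffP existsP) => [[u /existsP [v /and3P [xu uv vy]]] | [p [xp <- tsp]]].
- case/connectP: xu uv vy => p xp -> uv /connectP [q vq ->].
  exists (p ++ v :: q); rewrite cat_path last_cat has_tree_step_cat /= xp vq.
  by case/andP: (uv) => Euv _; rewrite has_tree_step_cons uv sub_Estar ?orbT.
- have [p1 [a [p2 [def_p p1a]]]] := has_tree_step_split tsp.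
  exists (last x p1); apply/existsP; exists a; rewrite p1a /=.
  move: xp; rewrite def_p cat_path /= => /and3P [xp1 _ ap2].
  apply/andP; split; apply/connectP; first by exists p1.
  by exists p2; rewrite // last_cat.
Qed.

Lemma tree_reach_connectl x y z :
  connect (Estar E) x y -> tree_reach y z -> tree_reach x z.
Proof.
move=> xy /existsP [u /existsP [v /and3P [yu uv vz]]].
by apply/existsP; exists u; apply/existsP; exists v; rewrite (connect_trans xy yu) uv.
Qed.

Lemma tree_reach_connectr x y z :
  tree_reach x y -> connect (Estar E) y z -> tree_reach x z.
Proof.
move=> /existsP [u /existsP [v /and3P [xu uv vy]]] yz.
by apply/existsP; exists u; apply/existsP; exists v; rewrite xu uv (connect_trans vy yz).
Qed.

Lemma tree_arc_reach u v : tree_arc E u v -> tree_reach u v.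
Proof.
by move=> uv; apply/existsP; exists u; apply/existsP; exists v; rewrite uv !connect0.
Qed.

Lemma no_tree_cycleP :
  no_tree_cycle_in_Nstar E <-> forall v, ~~ tree_reach v v.
Proof.
split=> [noc v | irr [x [p [_ xp px tsp]]]].
- apply/tree_reachP => -[p [vp pv tsp]]; apply: noc.
  by exists v, p; split=> //; case: p tsp {vp pv}.
- by case/tree_reachP: (irr x); exists p.
Qed.

Lemma split_first_back_arc x p : path (Estar E) x p -> ~~ path E x p ->
  exists p1 y p2, [/\ p = p1 ++ y :: p2, path E x p1,
                      ~~ E (last x p1) y & network_arc E y (last x p1)].
Proof.
elim: p x => [|y p IH] x //= /andP [xy yp].
case Exy: (E x y) => /= not_yp.
- have [p1 [z [p2 [-> p1E nE net]]]] := IH y yp not_yp.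
  by exists (y :: p1), z, p2; rewrite /= Exy.
- by exists [::], y, p; split; rewrite ?Exy //; move: xy; rewrite /Estar Exy.
Qed.

Lemma no_tree_cycle_of_stc : ~ has_cycle E ->
  strongly_time_consistent E -> no_tree_cycle_in_Nstar E.
Proof.
move=> acyclic stc; apply/no_tree_cycleP => v; apply/negP.
case/existsP => u /existsP [u' /and3P [vu uu' u'v]].
have [Euu' tree_u'] := andP uu'.
have /connectP [q u'q def_u] := connect_trans u'v vu.
have not_uq : ~~ path E u (u' :: q).
  apply/negP => uq; apply: acyclic.
  by exists u, (u' :: q); split; [|split] => //=; rewrite -def_u.
have uq : path (Estar E) u (u' :: q) by rewrite /= sub_Estar.
have [p1 [y [p2 [def_q p1E nE net]]]] := split_first_back_arc uq not_uq.
case/lastP: p1 def_q p1E nE net => [[<-] _|p1 h def_q]; first by rewrite Euu'.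
rewrite rcons_path !last_rcons => /andP [p1E Eh] _ net.
case: p1 def_q p1E Eh => [[h_u' _] _ _ | a p1 [<- def_q] p1E /= Eh].
  by move: net tree_u'; rewrite -h_u' /network_arc hybrid_nodeN => /andP [_ /negbTE ->].
have last_p2 : last y p2 = u by rewrite def_u def_q last_cat last_rcons.
move: u'q; rewrite def_q cat_path last_rcons /= => /and3P [_ _ yp2].
case/andP: net => Eyh hybrid_h.
apply: (stc y (last u' p1) (p2 ++ u' :: p1)).
- by rewrite cat_path yp2 last_p2 (sub_path sub_Estar p1E).
- by rewrite last_cat.
- by rewrite has_tree_step_cat last_p2 has_tree_step_cons uu' /= orbT.
- by exists h; rewrite hybrid_h Eyh.
Qed.

Lemma stc_of_no_tree_cycle :
  no_tree_cycle_in_Nstar E -> strongly_time_consistent E.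
Proof.
move=> /no_tree_cycleP irr x y p xp py tsp [h /and3P [hybrid_h Exh Eyh]].
have xy : tree_reach x y by apply/tree_reachP; exists p.
have yx : connect (Estar E) y x.
  apply: (connect_trans (connect1 (sub_Estar Eyh))); apply: connect1.
  by rewrite /Estar /network_arc Exh hybrid_h orbT.
by move: (irr x); rewrite (tree_reach_connectr xy yx).
Qed.

Section TemporalRepresentation.
Variables (tau : V -> nat) (temporal_tau : temporal_representation E tau).

Lemma temporal_Estar u v : Estar E u v -> tau u <= tau v.
Proof.
case: temporal_tau => _ tree_lt net_eq.
rewrite /Estar => /orP [uv | vu]; last by rewrite (net_eq _ _ vu).
case tree_v: (tree_node E v).
- by apply/ltnW/tree_lt; rewrite /tree_arc uv tree_v.
- by rewrite (net_eq u v) // /network_arc uv hybrid_nodeN tree_v.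
Qed.

Lemma temporal_connect u v : connect (Estar E) u v -> tau u <= tau v.
Proof.
case/connectP=> p + ->; elim: p u => //= w p IH u /andP [uw wp].
exact: leq_trans (temporal_Estar uw) (IH _ wp).
Qed.

Lemma temporal_tree_reach u v : tree_reach u v -> tau u < tau v.
Proof.
case/existsP=> a /existsP [b /and3P [ua ab bv]]; case: temporal_tau => _ tree_lt _.
apply: leq_ltn_trans (temporal_connect ua) _.
exact: leq_trans (tree_lt _ _ ab) (temporal_connect bv).
Qed.

Lemma no_tree_cycle_of_temporal : no_tree_cycle_in_Nstar E.
Proof.
by apply/no_tree_cycleP => v; apply/negP => /temporal_tree_reach; rewrite ltnn.
Qed.

End TemporalRepresentation.

Lemma connect_root r z : rooted_DAG E -> is_root E r -> connect E r z.
Proof.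
case=> acyclic [r0 [_ root_uniq]] r_root.
have [n] := ubnP #|[set w | connect E w z]|; elim: n z => // n IH z.
rewrite ltnS => anc_le; case z_root: (is_root E z).
  by rewrite (root_uniq _ z_root) -(root_uniq _ r_root) connect0.
have /card_gt0P [u] : 0 < indeg E z by rewrite lt0n; exact: negbT z_root.
rewrite inE => uz; apply: connect_trans (connect1 uz); apply: IH.
have anc_proper : [set w | connect E w u] \proper [set w | connect E w z].
  apply/properP; split.
  - by apply/subsetP => w; rewrite !inE => /connect_trans; apply; exact: connect1.
  - exists z; rewrite !inE ?connect0 //.
    by apply/negP => zu; apply: acyclic; exact: has_cycle_connect uz zu.
exact: leq_trans (proper_card anc_proper) anc_le.
Qed.

Definition tree_rank (v : V) : nat := #|[set w | tree_reach w v]|.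

Lemma tree_reach_subset u v : connect (Estar E) u v ->
  [set w | tree_reach w u] \subset [set w | tree_reach w v].
Proof.
by move=> uv; apply/subsetP => w; rewrite !inE => /tree_reach_connectr; apply.
Qed.

Lemma temporal_tree_rank : rooted_DAG E -> no_tree_cycle_in_Nstar E ->
  temporal_representation E tree_rank.
Proof.
move=> dag /no_tree_cycleP irr; rewrite /tree_rank.
split=> [r r_root | u v uv | u v uv].
- apply: eq_card0 => w; rewrite !inE; apply/negbTE/negP => wr.
  have rw : connect (Estar E) r w.
    apply: connect_sub (connect_root w dag r_root) => a b ab.
    exact/connect1/sub_Estar.
  by move: (irr r); rewrite (tree_reach_connectl rw wr).
- apply: proper_card; apply/properP; split.
  + by apply: tree_reach_subset; apply/connect1/sub_Estar; case/andP: uv.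
  + by exists u; rewrite !inE ?irr ?(tree_arc_reach uv).
- apply: anti_leq; apply/andP.
  split; apply/subset_leq_card/tree_reach_subset/connect1.
  + by apply: sub_Estar; case/andP: uv.
  + by rewrite /Estar uv orbT.
Qed.

End TimeConsistency.

Theorem proposition1 (V : finType) (E : rel V) :
  rooted_DAG E ->
  (strongly_time_consistent E <-> no_tree_cycle_in_Nstar E) /\
  (no_tree_cycle_in_Nstar E <-> exists tau : V -> nat, temporal_representation E tau).
Proof.
move=> dag; split; split.
- exact: no_tree_cycle_of_stc (proj1 dag).
- exact: stc_of_no_tree_cycle.
- by move=> noc; exists (tree_rank E); exact: temporal_tree_rank.
- by case=> tau; exact: no_tree_cycle_of_temporal.
Qed.
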